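(* Let $\{(X_\alpha,d_\alpha)\}_{\alpha\in\mathbb I}$ be a strict long directed family of metric spaces (with $X_\alpha\subseteq X_\beta$ for $\alpha\leq\beta$). If all bonding maps $(X_\alpha,d_\alpha)\to(X_\beta,d_\beta)$ are Lipschitz with a fixed constant $L>0$ (in particular, if they are isometries), then $$d(x,y):=\limsup_{\alpha\in\mathbb I}d_\alpha(x,y)=\inf_{\alpha\in\mathbb I}\sup\{d_\beta(x,y)\mid x,y\in X_\beta,\ \beta\geq\alpha\}$$ is a metric on $X=\bigcup_\alpha X_\alpha$, and it induces the colimit space topology $\mathscr T=\{U\subseteq X\mid U\cap X_\alpha\text{ open in }X_\alpha\ \forall\alpha\}$.
   Context: A directed family of spaces is strict if every bonding map (here the inclusion $X_\alpha\to X_\beta$, $\alpha\leq\beta$) is a topological embedding. It is long if the directed index set $\mathbb I$ is long: every countable subset of $\mathbb I$ has an upper bound in $\mathbb I$. *)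

From HB Require Import structures.
From mathcomp Require Import all_boot all_order all_algebra.
From mathcomp Require Import all_classical all_reals.
From mathcomp Require Import ereal.
Set Implicit Arguments. Unset Strict Implicit. Unset Printing Implicit Defensive.
Import Order.TTheory GRing.Theory Num.Theory.
Local Open Scope classical_set_scope.
Local Open Scope ring_scope.

Definition is_metric_on {R : realType} {T : Type} (A : set T) (d : T -> T -> R) : Prop :=
  forall x y z, A x -> A y -> A z ->
    [/\ 0 <= d x y, d x y = 0 <-> x = y, d x y = d y x & d x z <= d x y + d y z].

Definition metric_open {R : realType} {T : Type} (A : set T) (d : T -> T -> R) (U : set T) : Prop :=
  U `<=` A /\ forall x, U x -> exists2 r : R, 0 < r & forall y, A y -> d x y < r -> U y.

Definition incl_embedding {R : realType} {T : Type} (A : set T) (dA : T -> T -> R)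
    (B : set T) (dB : T -> T -> R) : Prop :=
  A `<=` B /\ forall U, U `<=` A ->
    (metric_open A dA U <-> exists V, metric_open B dB V /\ U = V `&` A).

Definition directed_preorder {I : Type} (le : I -> I -> Prop) : Prop :=
  [/\ (exists i : I, True), (forall i, le i i),
      (forall i j k, le i j -> le j k -> le i k) &
      (forall i j, exists k, le i k /\ le j k)].

Definition long_index {I : Type} (le : I -> I -> Prop) : Prop :=
  forall A : set I, countable A -> exists u, forall a, A a -> le a u.

Definition limsup_metric {R : realType} {T I : Type} (le : I -> I -> Prop)
    (X : I -> set T) (d : I -> T -> T -> R) (x y : T) : \bar R :=
  ereal_inf [set ereal_sup [set (d b x y)%:E | b in [set b | le a b /\ X b x /\ X b y]]
            | a in [set: I]].

From HB Require Import structures.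
From mathcomp Require Import all_boot all_order all_algebra.
From mathcomp Require Import all_classical all_reals.
From mathcomp Require Import ereal.
From mathcomp Require Import lra.
Import Order.TTheory GRing.Theory Num.Theory.
Local Open Scope classical_set_scope.
Local Open Scope ring_scope.

(* Lipschitz bonding maps make d(x,y) finite: it is squeezed between 0 and
   L d_a(x,y).  Because the index set is long, the infimum over alpha of the
   tail suprema is attained: a countable sequence of indices whose tail
   suprema tend to d(x,y) has an upper bound u, and beyond u every d_b(x,y)
   is at most d(x,y), while by definition some d_b(x,y) beyond any index comes
   arbitrarily close to d(x,y).  Comparing finitely many such indices through
   directedness transfers symmetry, the triangle inequality and definiteness
   from the d_b to d.  The same long-index argument, applied to a sequence of
   points y_n with d(x,y_n) < 1/(n+1) outside an open set of the colimit
   topology, places all of them in a single X_w, where they would violate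
   openness in (X_w, d_w). *)

Section LongIndex.
Context {I : Type} {le : I -> I -> Prop}.
Hypothesis long : long_index le.

Lemma long_index_seq_ub (a0 : I) (f : nat -> I) :
  exists u, le a0 u /\ forall n, le (f n) u.
Proof.
pose g n := if n is m.+1 then f m else a0.
have [u gu] := long (range g) (card_le_trans (card_image_le _ _) (countableP _)).
by exists u; split => [|n]; apply: gu; [exists 0%N | exists n.+1].
Qed.

End LongIndex.

Section LimsupMetric.
Variables (R : realType) (T I : Type) (le : I -> I -> Prop).
Variables (X : I -> set T) (d : I -> T -> T -> R) (L : R).
Hypothesis idx_refl : forall a, le a a.
Hypothesis idx_trans : forall {a b c}, le a b -> le b c -> le a c.
Hypothesis idx_directed : forall a b, exists c, le a c /\ le b c.
Hypothesis long : long_index le.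
Hypothesis metric : forall a, is_metric_on (X a) (d a).
(* Of the strictness of the family only these inclusions are needed. *)
Hypothesis X_mono : forall {a b}, le a b -> X a `<=` X b.
Hypothesis L_gt0 : 0 < L.
Hypothesis lipschitz :
  forall a b x y, le a b -> X a x -> X a y -> d b x y <= L * d a x y.

Definition tail_sup (a : I) (x y : T) : \bar R :=
  ereal_sup [set (d b x y)%:E | b in [set b | le a b /\ X b x /\ X b y]].

Local Notation dlim := (limsup_metric le X d).
Local Notation dist x y := (fine (dlim x y)).

Lemma tail_sup_ge0 a {a0 x y} : X a0 x -> X a0 y -> (0 <= tail_sup a x y)%E.
Proof.
move=> xa0 ya0; have [c [ac a0c]] := idx_directed a a0.
have [xc yc] := (X_mono a0c _ xa0, X_mono a0c _ ya0).
apply: le_ereal_sup_tmp; exists (d c x y)%:E; first by exists c.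
by rewrite lee_fin; have [] := metric _ _ _ _ xc yc xc.
Qed.

Lemma tail_sup_le_lipschitz {a x y} :
  X a x -> X a y -> (tail_sup a x y <= (L * d a x y)%:E)%E.
Proof.
by move=> xa ya; apply: ge_ereal_sup => _ [b [ab _] <-]; rewrite lee_fin lipschitz.
Qed.

Lemma tail_sup_le {a a' x y} : le a a' -> (tail_sup a' x y <= tail_sup a x y)%E.
Proof.
move=> aa'; apply: ereal_sup_le => _ [b [a'b xyb] <-].
by exists b => //; split => //; apply: idx_trans a'b.
Qed.

Lemma limsup_le_tail_sup a x y : (dlim x y <= tail_sup a x y)%E.
Proof. by apply: ereal_inf_lbound; exists a. Qed.

Lemma limsup_ge0 {a x y} : X a x -> X a y -> (0 <= dlim x y)%E.
Proof.
by move=> xa ya; apply: le_ereal_inf_tmp => _ [b _ <-]; apply: tail_sup_ge0 xa ya.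
Qed.

Lemma limsup_fin_num {a x y} : X a x -> X a y -> dlim x y \is a fin_num.
Proof.
move=> xa ya; rewrite ge0_fin_numE; last exact: limsup_ge0 xa ya.
apply: le_lt_trans (limsup_le_tail_sup a x y) _.
by apply: le_lt_trans (tail_sup_le_lipschitz xa ya) _; apply: ltry.
Qed.

Lemma limsup_attained {a0 x y} : X a0 x -> X a0 y ->
  exists2 u, le a0 u & (tail_sup u x y <= dlim x y)%E.
Proof.
move=> xa0 ya0; have dfin := limsup_fin_num xa0 ya0.
have /choice[f f_lt] : forall n : nat,
    exists a, (tail_sup a x y < dlim x y + (n.+1%:R^-1)%:E)%E.
  move=> n; have n_gt0 : (0 : R) < n.+1%:R^-1 by rewrite invr_gt0.
  by have [_ [a _ <-] ?] := lb_ereal_inf_adherent n_gt0 dfin; exists a.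
have [u [a0u fu]] := long_index_seq_ub long a0 f.
exists u => //; apply/lee_addgt0Pr => e e0.
have [n] := ltr_add_invr e0; rewrite add0r => ne.
apply: le_trans (tail_sup_le (fu n)) _; apply: le_trans (ltW (f_lt n)) _.
by rewrite leeD2l // lee_fin ltW.
Qed.

Lemma limsup_eventually_ub {a0 x y} : X a0 x -> X a0 y ->
  exists2 u, le a0 u & forall b, le u b -> d b x y <= dist x y.
Proof.
move=> xa0 ya0; have [u a0u Su] := limsup_attained xa0 ya0.
exists u => // b ub; have a0b := idx_trans a0u ub.
rewrite -lee_fin fineK; last exact: limsup_fin_num xa0 ya0.
apply: le_trans Su; apply: le_ereal_sup_tmp; exists (d b x y)%:E => //.
by exists b => //; split => //; split; apply: X_mono a0b _ _.
Qed.

Lemma limsup_approx {a x y e} : X a x -> X a y -> 0 < e ->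
  exists2 b, le a b & dist x y - e < d b x y.
Proof.
move=> xa ya e0; have dfin := limsup_fin_num xa ya.
have : ((dist x y - e)%:E < tail_sup a x y)%E.
  apply: lt_le_trans (limsup_le_tail_sup a x y).
  by rewrite -[X in (_ < X)%E](fineK dfin) lte_fin ltrBlDr ltrDl.
by case/ereal_sup_gt => _ [b [ab _] <-]; rewrite lte_fin; exists b.
Qed.

Lemma fine_limsup_ge0 {a x y} : X a x -> X a y -> 0 <= dist x y.
Proof. by move=> xa ya; apply: fine_ge0; apply: limsup_ge0 xa ya. Qed.

Lemma limsup_le_lipschitz {a x y} : X a x -> X a y -> dist x y <= L * d a x y.
Proof.
move=> xa ya; rewrite -lee_fin fineK; last exact: limsup_fin_num xa ya.
exact: le_trans (limsup_le_tail_sup a x y) (tail_sup_le_lipschitz xa ya).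
Qed.

Lemma limsup_xx {a x} : X a x -> dist x x = 0.
Proof.
move=> xa; apply/eqP; rewrite eq_le (fine_limsup_ge0 xa xa) andbT.
apply: le_trans (limsup_le_lipschitz xa xa) _.
by have [_ [_ d_xx] _ _] := metric _ _ _ _ xa xa xa; rewrite d_xx ?mulr0.
Qed.

Lemma limsup_eq0 {a x y} : X a x -> X a y -> dist x y = 0 -> x = y.
Proof.
move=> xa ya dxy0; have [u au d_le] := limsup_eventually_ub xa ya.
have [xu yu] := (X_mono au _ xa, X_mono au _ ya).
have [d_ge0 [d_eq0 _] _ _] := metric _ _ _ _ xu yu xu.
by apply: d_eq0; apply/eqP; rewrite eq_le d_ge0 -dxy0 (d_le u (idx_refl u)).
Qed.

Lemma limsup_le_sym {a x y} : X a x -> X a y -> dist x y <= dist y x.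
Proof.
move=> xa ya; have [u au d_le] := limsup_eventually_ub ya xa.
apply/ler_addgt0Pr => e e0.
have [b ub lt] := limsup_approx (X_mono au _ xa) (X_mono au _ ya) e0.
have ab := idx_trans au ub.
have [xb yb] := (X_mono ab _ xa, X_mono ab _ ya).
have [_ _ d_sym _] := metric _ _ _ _ xb yb xb.
by have := d_le b ub; rewrite -d_sym; lra.
Qed.

Lemma limsup_triangle {a x y z} : X a x -> X a y -> X a z ->
  dist x z <= dist x y + dist y z.
Proof.
move=> xa ya za; have [u1 au1 d_le1] := limsup_eventually_ub xa ya.
have [u2 _ d_le2] := limsup_eventually_ub ya za.
have [w [u1w u2w]] := idx_directed u1 u2; have aw := idx_trans au1 u1w.
apply/ler_addgt0Pr => e e0.
have [b wb lt] := limsup_approx (X_mono aw _ xa) (X_mono aw _ za) e0.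
have ab := idx_trans aw wb.
have [[xb yb] zb] := (X_mono ab _ xa, X_mono ab _ ya, X_mono ab _ za).
have [_ _ _ tri] := metric _ _ _ _ xb yb zb.
have := d_le1 b (idx_trans u1w wb); have := d_le2 b (idx_trans u2w wb); lra.
Qed.

Local Notation Xall := (\bigcup_a X a).

Lemma common_index {x y} : Xall x -> Xall y -> exists a, X a x /\ X a y.
Proof.
move=> [a _ xa] [b _ yb]; have [c [ac bc]] := idx_directed a b.
by exists c; split; [apply: X_mono ac _ xa | apply: X_mono bc _ yb].
Qed.

Lemma limsup_fin_num_all x y : Xall x -> Xall y -> dlim x y \is a fin_num.
Proof.
by move=> Xx Xy; have [a [xa ya]] := common_index Xx Xy; apply: limsup_fin_num xa ya.
Qed.

Lemma is_metric_limsup : is_metric_on Xall (fun x y => dist x y).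
Proof.
move=> x y z Xx Xy Xz.
have [a [xa ya]] := common_index Xx Xy; have [b [_ zb]] := common_index Xx Xz.
have [c [ac bc]] := idx_directed a b.
have [[xc yc] zc] := (X_mono ac _ xa, X_mono ac _ ya, X_mono bc _ zb).
split.
- exact: fine_limsup_ge0 xc yc.
- by split; [exact: limsup_eq0 xc yc | move=> <-; exact: limsup_xx xc].
- by apply/eqP; rewrite eq_le (limsup_le_sym xc yc) (limsup_le_sym yc xc).
- exact: limsup_triangle xc yc zc.
Qed.

Lemma metric_open_limsup_restrict U a :
  metric_open Xall (fun x y => dist x y) U -> metric_open (X a) (d a) (U `&` X a).
Proof.
move=> [_ Uop]; split; first by move=> ? [].
move=> x [Ux xa]; have [r r0 rU] := Uop x Ux.
exists (r / L); first exact: divr_gt0.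
move=> y ya dxy; split => //; apply: rU; first by exists a.
rewrite ltr_pdivlMr // mulrC in dxy.
exact: le_lt_trans (limsup_le_lipschitz xa ya) dxy.
Qed.

Lemma metric_open_limsup_of_restrict U :
  U `<=` Xall -> (forall a, metric_open (X a) (d a) (U `&` X a)) ->
  metric_open Xall (fun x y => dist x y) U.
Proof.
move=> UX Uop; split => // x Ux; apply: contrapT => not_ball.
have /choice[y y_spec] : forall n : nat,
    exists y, [/\ Xall y, dist x y < n.+1%:R^-1 & ~ U y].
  move=> n; apply: contrapT => no_y; apply: not_ball.
  exists n.+1%:R^-1 => [|z Xz dz]; first by rewrite invr_gt0.
  by apply: contrapT => Uz; apply: no_y; exists z.
have [ax _ xax] := UX x Ux.
have /choice[u u_spec] : forall n : nat, exists u, [/\ le ax u, X u (y n) &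
    forall b, le u b -> d b x (y n) <= dist x (y n)].
  move=> n; have [[c _ yc] _ _] := y_spec n.
  have [c' [axc' cc']] := idx_directed ax c.
  have [un c'un ub] := limsup_eventually_ub (X_mono axc' _ xax) (X_mono cc' _ yc).
  exists un; split => //; first exact: idx_trans c'un.
  exact: X_mono (idx_trans cc' c'un) _ yc.
have [w [axw uw]] := long_index_seq_ub long ax u.
have [r r0 rU] := (Uop w).2 x (conj Ux (X_mono axw _ xax)).
have [n] := ltr_add_invr r0; rewrite add0r => nr.
have [_ yn ub] := u_spec n; have [_ dn nU] := y_spec n.
have d_lt_r : d w x (y n) < r := le_lt_trans (ub w (uw n)) (lt_trans dn nr).
by have [] := rU (y n) (X_mono (uw n) _ yn) d_lt_r.
Qed.

End LimsupMetric.

Theorem theorem2p8 (R : realType) (T I : Type) (le : I -> I -> Prop)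
    (X : I -> set T) (d : I -> T -> T -> R) (L : R) :
  directed_preorder le -> long_index le ->
  (forall a, is_metric_on (X a) (d a)) ->
  (forall a b, le a b -> incl_embedding (X a) (d a) (X b) (d b)) ->
  0 < L ->
  (forall a b x y, le a b -> X a x -> X a y -> d b x y <= L * d a x y) ->
  let Xall := \bigcup_a X a in
  let dlim := limsup_metric le X d in
  (forall x y, Xall x -> Xall y -> dlim x y \is a fin_num) /\
  is_metric_on Xall (fun x y => fine (dlim x y)) /\
  (forall U, metric_open Xall (fun x y => fine (dlim x y)) U <->
     (U `<=` Xall /\ forall a, metric_open (X a) (d a) (U `&` X a))).
Proof.
move=> [_ idx_refl idx_trans idx_directed] long metric emb L_gt0 lipschitz Xall dlim.
have X_mono a b (ab : le a b) : X a `<=` X b := (emb a b ab).1.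
split; first exact: limsup_fin_num_all idx_directed metric X_mono lipschitz.
split.
  exact: is_metric_limsup idx_refl idx_trans idx_directed long metric X_mono
    lipschitz.
move=> U; split => [Uop | [UX Uop]].
- split => [|a]; first by case: Uop.
  exact: metric_open_limsup_restrict idx_directed metric X_mono L_gt0 lipschitz
    _ _ Uop.
- exact: metric_open_limsup_of_restrict idx_trans idx_directed long metric
    X_mono lipschitz _ UX Uop.
Qed.
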